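(* Let $(E,\tau)$ be a uniquely generated convex space such that every $A\subseteq E$ has a unique inclusion-maximal generator. Then the partition $\mathcal{P}$ of $2^E$ into the equivalence classes of the relation $X\sim Y\iff\tau(X)=\tau(Y)$ is a hypercube partition of $2^E$, i.e., every equivalence class is an interval $[A,B]=\{C\subseteq E:A\subseteq C\subseteq B\}$ for some $A\subseteq B\subseteq E$.
   Context: $E$ is a finite set and $\tau:2^E\to 2^E$. $(E,\tau)$ is a convex space if (C1) $Y\subseteq\tau(Y)$ for all $Y\subseteq E$, and (convexity) for all $Y_1\subseteq Y_2\subseteq Y_3\subseteq E$ with $\tau(Y_1)=\tau(Y_3)$ we have $\tau(Y_2)=\tau(Y_1)$. For $A\subseteq E$, a generator of $A$ is any $B\subseteq E$ with $\tau(B)=\tau(A)$; a basis of $A$ is an inclusion-minimal generator of $A$. The space is uniquely generated if every $A\subseteq E$ has exactly one basis. A hypercube partition of $2^E$ is a partition of $2^E$ into disjoint intervals $[A,B]$. *)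

From mathcomp Require Import all_boot.
Set Implicit Arguments. Unset Strict Implicit. Unset Printing Implicit Defensive.

Section Defs.
Variable E : finType.
Variable tau : {set E} -> {set E}.

Definition extensive := forall Y : {set E}, Y \subset tau Y.

Definition convexity := forall Y1 Y2 Y3 : {set E},
  Y1 \subset Y2 -> Y2 \subset Y3 -> tau Y1 = tau Y3 -> tau Y2 = tau Y1.

Definition convex_space := extensive /\ convexity.

Definition generator (A B : {set E}) := tau B = tau A.

Definition basis (A B : {set E}) :=
  generator A B /\ forall C : {set E}, C \subset B -> generator A C -> C = B.

Definition max_generator (A B : {set E}) :=
  generator A B /\ forall C : {set E}, B \subset C -> generator A C -> C = B.

Definition uniquely_generated :=
  forall A : {set E}, exists! B : {set E}, basis A B.

Definition unique_max_generator :=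
  forall A : {set E}, exists! B : {set E}, max_generator A B.

Definition interval (A B : {set E}) : {set {set E}} :=
  [set C : {set E} | (A \subset C) && (C \subset B)].

Definition tau_class (X : {set E}) : {set {set E}} :=
  [set Y : {set E} | tau Y == tau X].

Definition tau_partition : {set {set {set E}}} :=
  [set tau_class X | X : {set E}].

Definition hypercube_partition (P : {set {set {set E}}}) :=
  partition P [set: {set E}] /\
  forall K, K \in P -> exists A B : {set E}, A \subset B /\ K = interval A B.
End Defs.

From mathcomp Require Import all_boot.

(* The classes of tau X = tau Y partition 2^E for any map tau.  Every generator of X
   contains a minimal one and lies in a maximal one; by uniqueness these are the basis A
   and the maximal generator B of X, so the class of X lies in [A, B], and convexity
   (applied to A, Y, B) gives the reverse inclusion. *)

Section ClassIntervals.
Variables (E : finType) (tau : {set E} -> {set E}).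

Lemma basis_subset_generator : uniquely_generated tau ->
  forall X A Y : {set E}, basis tau X A -> generator tau X Y -> A \subset Y.
Proof.
move=> ug X A Y basisA genY; have [A' [_ uniqA]] := ug X.
have [C /minsetP [/eqP genC minC] sCY] :=
  @minset_exists _ (fun C => tau C == tau X) Y (introT eqP genY).
have basisC : basis tau X C.
  by split=> // D sDC genD; apply: minC => //; apply/eqP.
by rewrite -(uniqA _ basisA) (uniqA _ basisC).
Qed.

Lemma generator_subset_max_generator : unique_max_generator tau ->
  forall X B Y : {set E}, max_generator tau X B -> generator tau X Y -> Y \subset B.
Proof.
move=> umg X B Y maxB genY; have [B' [_ uniqB]] := umg X.
have [C /maxsetP [/eqP genC maxC] sYC] :=
  @maxset_exists _ (fun C => tau C == tau X) Y (introT eqP genY).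
have maxgenC : max_generator tau X C.
  by split=> // D sCD genD; apply: maxC => //; apply/eqP.
by rewrite -(uniqB _ maxB) (uniqB _ maxgenC).
Qed.

Lemma tau_class_interval : convexity tau -> uniquely_generated tau ->
  unique_max_generator tau ->
  forall X : {set E}, exists A B : {set E}, A \subset B /\ tau_class tau X = interval A B.
Proof.
move=> cvx ug umg X.
have [A [basisA _]] := ug X; have [B [maxB _]] := umg X.
exists A, B; split.
  exact: generator_subset_max_generator maxB basisA.1.
apply/setP=> Y; rewrite !inE; apply/eqP/andP => [genY | [sAY sYB]].
  split; [exact: basis_subset_generator basisA genY
         | exact: generator_subset_max_generator maxB genY].
have tauAB : tau A = tau B by rewrite basisA.1 maxB.1.
by rewrite (cvx _ _ _ sAY sYB tauAB) basisA.1.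
Qed.

Lemma tau_partition_partition : partition (tau_partition tau) [set: {set E}].
Proof.
apply/and3P; split.
- apply/eqP/setP=> Y; rewrite inE; apply/bigcupP; exists (tau_class tau Y).
    exact: imset_f.
  by rewrite inE.
- apply/trivIsetP=> _ _ /imsetP [X1 _ ->] /imsetP [X2 _ ->] neq.
  apply/pred0P=> Y; rewrite /= !inE; apply/negP=> /andP [/eqP eq1 /eqP eq2].
  by move/negP: neq; apply; apply/eqP/setP=> Z; rewrite !inE -eq1 eq2.
- apply/imsetP=> [[X _ eqX]].
  have : X \in tau_class tau X by rewrite inE.
  by rewrite -eqX inE.
Qed.

End ClassIntervals.

Theorem mainTheorem19 (E : finType) (tau : {set E} -> {set E}) :
  convex_space tau ->
  uniquely_generated tau ->
  unique_max_generator tau ->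
  hypercube_partition (tau_partition tau).
Proof.
move=> [_ cvx] ug umg; split; first exact: tau_partition_partition.
by move=> _ /imsetP [X _ ->]; exact: tau_class_interval.
Qed.
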